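(* Let $(X,d)$ be a metric space such that $d(v,v')<\pi/2$ for all $v,v'\in X$, let $T\colon X\to X$ be a vicinal mapping, let $p\in X$, and let $\{x_n\}$ be a sequence in $X$ such that $\mathrm{AC}(\{x_n\})=\{p\}$ and $d(Tx_n,x_n)\to 0$. Then $Tp=p$.
   Context: The asymptotic center of $\{x_n\}$ is $\mathrm{AC}(\{x_n\})=\{z\in X:\limsup_n d(x_n,z)=\inf_{y\in X}\limsup_n d(x_n,y)\}$. With $C_z=\cos d(Tz,z)$, $T$ is vicinal if for all $x,y\in X$: $\bigl(C_x^2(1+C_y^2)+C_y^2(1+C_x^2)\bigr)\cos d(Tx,Ty)\ge C_x^2(1+C_y^2)\cos d(Tx,y)+C_y^2(1+C_x^2)\cos d(Ty,x)$. *)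

From Stdlib Require Import Reals.
Open Scope R_scope.

Definition is_metric {X : Type} (d : X -> X -> R) : Prop :=
  (forall x y, 0 <= d x y) /\
  (forall x y, d x y = 0 <-> x = y) /\
  (forall x y, d x y = d y x) /\
  (forall x y z, d x z <= d x y + d y z).

Definition is_limsup (u : nat -> R) (L : R) : Prop :=
  (forall eps, 0 < eps -> exists N, forall n, (N <= n)%nat -> u n < L + eps) /\
  (forall eps, 0 < eps -> forall N, exists n, (N <= n)%nat /\ L - eps < u n).

Definition in_AC {X : Type} (d : X -> X -> R) (x : nat -> X) (z : X) : Prop :=
  exists L, is_limsup (fun n => d (x n) z) L /\
    forall y L', is_limsup (fun n => d (x n) y) L' -> L <= L'.

Definition Cz {X : Type} (d : X -> X -> R) (T : X -> X) (z : X) : R :=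
  cos (d (T z) z).

Definition vicinal {X : Type} (d : X -> X -> R) (T : X -> X) : Prop :=
  forall x y : X,
    let Cx := Cz d T x in let Cy := Cz d T y in
    (Cx ^ 2 * (1 + Cy ^ 2) + Cy ^ 2 * (1 + Cx ^ 2)) * cos (d (T x) (T y))
    >= Cx ^ 2 * (1 + Cy ^ 2) * cos (d (T x) y)
       + Cy ^ 2 * (1 + Cx ^ 2) * cos (d (T y) x).

(** For a vicinal [T], the defining inequality at the pair [(x_n, p)] together with
    [d(Tx_n, x_n) -> 0] gives [cos d(x_n, p) - cos d(x_n, Tp) <= 12 d(Tx_n, x_n)]
    eventually.  Since all distances lie in [[0, pi/2)], where [cos] decreases with a
    uniform gap, this yields [d(x_n, Tp) < d(x_n, p) + e] eventually for every [e > 0],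
    so [limsup d(x_n, Tp) <= limsup d(x_n, p)].  Hence [Tp] is also an asymptotic
    center, and uniqueness of the asymptotic center forces [Tp = p]. *)

From Stdlib Require Import Reals Lra Psatz Lia.
From Coquelicot Require Import Coquelicot.
Open Scope R_scope.

Lemma cos_lipschitz a b : Rabs (cos a - cos b) <= Rabs (a - b).
Proof.
  destruct (MVT_abs cos (fun t => - sin t) b a) as [c [-> _]].
  { intros c _; apply derivable_pt_lim_cos. }
  rewrite Rabs_Ropp.
  rewrite <- (Rmult_1_l (Rabs (a - b))) at 2.
  apply Rmult_le_compat_r; [apply Rabs_pos|].
  apply Rabs_le; pose proof (SIN_bound c); lra.
Qed.

Lemma one_sub_le_cos a : 0 <= a -> 1 - a <= cos a.
Proof.
  intros Ha.
  pose proof (cos_lipschitz a 0) as Hlip.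
  rewrite cos_0, Rminus_0_r, (Rabs_pos_eq a Ha) in Hlip.
  apply Rabs_le_between in Hlip; lra.
Qed.

(* [cos] loses at least [1 - cos e] over any step of length [e] inside [[0, pi/2]]:
   by the addition formula and [sin + cos >= 1] on that interval. *)
Lemma cos_sub_ge_gap a b e : 0 <= a -> b <= PI / 2 -> 0 < e <= PI / 2 ->
  a + e <= b -> 1 - cos e <= cos a - cos b.
Proof.
  intros Ha Hb He Hab.
  pose proof PI_RGT_0.
  assert (Hcos_b : cos b <= cos (a + e)).
  { destruct (Rle_lt_or_eq _ _ Hab) as [Hlt | ->]; [|lra].
    left; apply cos_decreasing_1; lra. }
  rewrite cos_plus in Hcos_b.
  assert (0 <= cos a) by (apply cos_ge_0; lra).
  assert (0 <= sin a) by (apply sin_ge_0; lra).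
  assert (0 <= cos e) by (apply cos_ge_0; lra).
  assert (0 <= sin e) by (apply sin_ge_0; lra).
  pose proof (sin2_cos2 a); pose proof (sin2_cos2 e); unfold Rsqr in *.
  assert (1 <= sin a + cos a) by nra.
  assert (1 <= sin e + cos e) by nra.
  pose proof (COS_bound e).
  nra.
Qed.

Section Vicinal.

Variables (X : Type) (d : X -> X -> R) (T : X -> X).
Hypothesis Hd : is_metric d.

Lemma cos_dist_shift a b z : Rabs (cos (d a z) - cos (d b z)) <= d a b.
Proof.
  destruct Hd as [Hpos [_ [Hsym Htri]]].
  eapply Rle_trans; [apply cos_lipschitz|].
  apply Rabs_le_between'.
  pose proof (Htri a b z); pose proof (Htri b a z); rewrite (Hsym b a) in *; lra.
Qed.

Hypothesis HT : vicinal d T.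

(* In the vicinal inequality at [(x, y)], replace [cos d(Tx, Ty)] and [cos d(Tx, y)] by
   [cos d(x, Ty)] and [cos d(x, y)]; each replacement costs at most [d(Tx, x)]. *)
Lemma vicinal_cos_defect x y :
  Cz d T x ^ 2 * (cos (d x y) - cos (d x (T y))) <= 6 * d (T x) x.
Proof.
  destruct Hd as [Hpos [_ [Hsym _]]].
  pose proof (HT x y) as Hvic; cbv zeta in Hvic.
  rewrite (Hsym (T y) x) in Hvic.
  pose proof (cos_dist_shift (T x) x (T y)) as Hu.
  pose proof (cos_dist_shift (T x) x y) as Hv.
  apply Rabs_le_between' in Hu; apply Rabs_le_between' in Hv.
  pose proof (Hpos (T x) x).
  set (delta := d (T x) x) in *.
  set (A := Cz d T x ^ 2) in *; set (B := Cz d T y ^ 2) in *.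
  assert (0 <= A <= 1) by (unfold A, Cz; pose proof (COS_bound (d (T x) x)); nra).
  assert (0 <= B <= 1) by (unfold B, Cz; pose proof (COS_bound (d (T y) y)); nra).
  set (V := cos (d x y)) in *; set (W := cos (d x (T y))) in *.
  destruct (Rle_or_lt V W) as [HVW|HVW]; [nra|].
  assert (Hscaled : A * (1 + B) * (V - W) <= (2 * (A * (1 + B)) + B * (1 + A)) * delta).
  { set (Q := A * (1 + B)) in *; set (S := B * (1 + A)) in *.
    assert (0 <= Q) by (unfold Q; nra). assert (0 <= S) by (unfold S; nra).
    assert ((Q + S) * cos (d (T x) (T y)) <= (Q + S) * (W + delta))
      by (apply Rmult_le_compat_l; lra).
    assert (Q * (V - delta) <= Q * cos (d (T x) y)) by (apply Rmult_le_compat_l; lra).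
    nra. }
  assert (A * B * (V - W) >= 0) by (apply Rle_ge, Rmult_le_pos; nra).
  assert ((2 * (A * (1 + B)) + B * (1 + A)) * delta <= 6 * delta)
    by (apply Rmult_le_compat_r; nra).
  nra.
Qed.

Lemma dist_to_image_eventually_lt (p : X) (x : nat -> X) :
  (forall v v', d v v' < PI / 2) -> Un_cv (fun n => d (T (x n)) (x n)) 0 ->
  forall e, 0 < e -> exists N, forall n, (N <= n)%nat -> d (x n) (T p) < d (x n) p + e.
Proof.
  intros Hdiam Hcv e He.
  destruct Hd as [Hpos _].
  pose proof PI2_1.
  set (eps := Rmin e 1).
  assert (Heps : 0 < eps <= 1) by (unfold eps; split; [apply Rmin_glb_lt|apply Rmin_r]; lra).
  assert (eps <= e) by apply Rmin_l.
  set (eta := 1 - cos eps).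
  assert (Heta : 0 < eta).
  { assert (cos eps < cos 0) by (apply cos_decreasing_1; lra).
    rewrite cos_0 in *; unfold eta; lra. }
  destruct (Hcv (Rmin (eta / 12) (1 / 4))) as [N HN]; [apply Rmin_glb_lt; lra|].
  exists N; intros n Hn.
  specialize (HN n Hn); unfold R_dist in HN.
  rewrite Rminus_0_r, Rabs_pos_eq in HN by apply Hpos.
  pose proof (Rmin_l (eta / 12) (1 / 4)); pose proof (Rmin_r (eta / 12) (1 / 4)).
  assert (Hcos : 3 / 4 <= Cz d T (x n)).
  { pose proof (one_sub_le_cos _ (Hpos (T (x n)) (x n))); unfold Cz; lra. }
  apply Rnot_le_lt; intros Hfar.
  assert (Hgap : eta <= cos (d (x n) p) - cos (d (x n) (T p))).
  { apply cos_sub_ge_gap; [apply Hpos | apply Rlt_le, Hdiam | lra | lra]. }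
  assert (9 / 16 * eta <= Cz d T (x n) ^ 2 * (cos (d (x n) p) - cos (d (x n) (T p)))).
  { apply Rmult_le_compat; lra || nra. }
  pose proof (vicinal_cos_defect (x n) p).
  lra.
Qed.

End Vicinal.

Lemma bounded_has_limsup (u : nat -> R) (M : R) :
  (forall n, 0 <= u n <= M) -> exists L, is_limsup u L.
Proof.
  intros Hu.
  destruct (ex_LimSup_seq u) as [[L| |] HL]; simpl in HL.
  - exists L; split; intros e He.
    + exact (proj2 (HL (mkposreal e He))).
    + exact (proj1 (HL (mkposreal e He))).
  - destruct (HL M 0%nat) as [n [_ Hn]]; specialize (Hu n); lra.
  - destruct (HL 0) as [N HN]; specialize (HN N (le_n N)); specialize (Hu N); lra.
Qed.

Lemma is_limsup_le (u v : nat -> R) (Lu Lv : R) :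
  is_limsup u Lu -> is_limsup v Lv ->
  (forall e, 0 < e -> exists N, forall n, (N <= n)%nat -> u n < v n + e) ->
  Lu <= Lv.
Proof.
  intros [_ Hu] [Hv _] Huv.
  apply Rnot_lt_le; intros Hlt.
  set (e := (Lu - Lv) / 3).
  assert (He : 0 < e) by (unfold e; lra).
  destruct (Hv e He) as [N1 HN1]; destruct (Huv e He) as [N2 HN2].
  destruct (Hu e He (Nat.max N1 N2)) as [n [Hn Hun]].
  specialize (HN1 n ltac:(lia)); specialize (HN2 n ltac:(lia)).
  unfold e in *; lra.
Qed.

Lemma in_AC_of_limsup_le (X : Type) (d : X -> X -> R) (x : nat -> X) (z w : X) (L L' : R) :
  in_AC d x z -> is_limsup (fun n => d (x n) z) L ->
  is_limsup (fun n => d (x n) w) L' -> L' <= L -> in_AC d x w.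
Proof.
  intros [L0 [HL0 Hmin]] HL HL' Hle.
  exists L'; split; [exact HL'|].
  intros y Ly HLy.
  assert (L <= L0).
  { apply (is_limsup_le _ _ _ _ HL HL0).
    intros e He; exists 0%nat; intros n _; lra. }
  pose proof (Hmin y Ly HLy); lra.
Qed.

Theorem lemma4p4 (X : Type) (d : X -> X -> R) (T : X -> X) (p : X) (x : nat -> X)
  (Hd : is_metric d)
  (Hdiam : forall v v' : X, d v v' < PI / 2)
  (HT : vicinal d T)
  (HAC : forall z : X, in_AC d x z <-> z = p)
  (Hcv : Un_cv (fun n => d (T (x n)) (x n)) 0) :
  T p = p.
Proof.
  apply HAC.
  assert (HACp : in_AC d x p) by (apply HAC; reflexivity).
  assert (Hbound : forall z n, 0 <= d (x n) z <= PI / 2).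
  { intros z n; split; [apply Hd|apply Rlt_le, Hdiam]. }
  destruct (bounded_has_limsup _ _ (Hbound p)) as [L HL].
  destruct (bounded_has_limsup _ _ (Hbound (T p))) as [L' HL'].
  apply (in_AC_of_limsup_le _ _ _ _ _ _ _ HACp HL HL').
  apply (is_limsup_le _ _ _ _ HL' HL).
  exact (dist_to_image_eventually_lt _ _ _ Hd HT p x Hdiam Hcv).
Qed.
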